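(* Let $n\ge 2$. The following are equivalent: (i) the power graph $P(S_n)$ is $2$-connected; (ii) $P_0(S_n)$ is connected; (iii) $\widetilde P_0(S_n)$ is connected; (iv) $P_0(\mathcal T(S_n))$ is connected; (v) $\mathcal O_0(S_n)$ is connected; (vi) $n=2$, or neither $n$ nor $n-1$ is a prime.
   Context: The power graph $P(G)$ of a finite group $G$ has vertex set $G$, distinct $x,y$ adjacent iff one is a positive power of the other; a graph is $2$-connected if deleting any single vertex (with incident edges) leaves a connected graph. $G_0=G\setminus\{1\}$; $P_0(G)$ is $P(G)$ with vertex $1$ deleted. $\widetilde P_0(G)$: vertex set $\{[x]:x\in G_0\}$, $[x]=\{y:\langle y\rangle=\langle x\rangle\}$, distinct $[x],[y]$ adjacent iff some representatives are one a positive power of the other. $\mathcal O_0(G)$: vertices the element orders $\ne1$, distinct $m,m'$ adjacent iff one divides the other. For $\psi\in S_n$, $T_\psi$ is the partition of $n$ given by orbit lengths of $\langle\psi\rangle$; for $T=[m_1^{t_1},\dots,m_k^{t_k}]$, $T^a=[(m_i/\gcd(a,m_i))^{t_i\gcd(a,m_i)}]_i$. $P_0(\mathcal T(S_n))$: vertices the partitions of $n$ other than $[1^n]$, distinct $T,T'$ adjacent iff one is a power of the other. *)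

From mathcomp Require Import all_boot all_fingroup.
From Stdlib Require Import Relations.
Set Implicit Arguments. Unset Strict Implicit. Unset Printing Implicit Defensive.

Definition connected_on (T : Type) (V : T -> Prop) (e : T -> T -> Prop) : Prop :=
  forall x y, V x -> V y ->
    clos_refl_trans T (fun a b => V a /\ V b /\ e a b) x y.

Section PowerGraph.
Variable gT : finGroupType.

Definition ppow (x y : gT) : Prop := exists k : nat, (0 < k)%N /\ y = (x ^+ k)%g.

Definition padj (x y : gT) : Prop := x <> y /\ (ppow x y \/ ppow y x).

Definition power_graph_2connected : Prop :=
  forall v : gT, connected_on (fun x => x <> v) padj.

Definition P0_connected : Prop := connected_on (fun x : gT => x <> 1%g) padj.

Definition gen_class (x : gT) : {set gT} := [set y | <[y]>%g == <[x]>%g].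

Definition tP0_vertex (C : {set gT}) : Prop :=
  exists x : gT, x <> 1%g /\ C = gen_class x.

Definition tP0_adj (C D : {set gT}) : Prop :=
  C <> D /\ exists x y : gT, x \in C /\ y \in D /\ (ppow x y \/ ppow y x).

Definition tP0_connected : Prop := connected_on tP0_vertex tP0_adj.

Definition O0_vertex (m : nat) : Prop := m <> 1%N /\ exists x : gT, #[x]%g = m.
Definition O0_adj (m m' : nat) : Prop := m <> m' /\ (m %| m' \/ m' %| m).
Definition O0_connected : Prop := connected_on O0_vertex O0_adj.

End PowerGraph.

Definition is_partition (n : nat) (T : seq nat) : Prop :=
  sorted geq T /\ all (fun m => 0 < m) T /\ sumn T = n.

Definition part_pow (a : nat) (T : seq nat) : seq nat :=
  sort geq (flatten [seq nseq (gcdn a m) (m %/ gcdn a m) | m <- T]).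

Definition PT0_vertex (n : nat) (T : seq nat) : Prop :=
  is_partition n T /\ T <> nseq n 1%N.
Definition PT0_adj (T T' : seq nat) : Prop :=
  T <> T' /\ ((exists a, 0 < a /\ T' = part_pow a T) \/
              (exists a, 0 < a /\ T = part_pow a T')).
Definition PT0_connected (n : nat) : Prop := connected_on (PT0_vertex n) PT0_adj.

From mathcomp Require Import all_boot all_fingroup all_solvable zify.
From Stdlib Require Import Relations.
Set Implicit Arguments. Unset Strict Implicit. Unset Printing Implicit Defensive.

(* If p >= 3 is prime and n is p or p + 1, an element of order p in S_n is a p-cycle whose
   centraliser is the cyclic group it generates.  So in O_0(S_n) the order p has no
   neighbour, which disconnects O_0(S_n) and hence P_0(S_n); likewise the cycle type
   [p, 1^(n-p)] has no neighbour among the partitions.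

   Conversely let n >= 9 with n and n - 1 composite.  Two commuting elements of coprime
   orders are powers of their product, hence joined in P_0(S_n).  A nontrivial permutation
   has a power y of prime order, and y commutes with an element of order 2 or 3 (a
   transposition or 3-cycle on fixed points of y, a product g g^y of a 3-cycle and its
   conjugate, or an involution exchanging two p-cycles of y); iterating joins y to a fixed
   transposition.  For partitions, raising a type to a prime dividing one of its parts adds
   parts, until a type [p^k, 1^f] is reached, which is joined to [2, 1^(n-2)] by explicit
   powers.  The other graphs are quotients of P_0(S_n), or P(S_n) whose vertex 1 is
   adjacent to everything. *)

Notation induced_path V e := (clos_refl_trans _ (fun a b => V a /\ V b /\ e a b)).

Section InducedPaths.
Variables (T : Type) (V : T -> Prop) (e : T -> T -> Prop).

Lemma induced_path_trans x y z :
  induced_path V e x y -> induced_path V e y z -> induced_path V e x z.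
Proof. exact: rt_trans. Qed.

Lemma induced_path_step x y : V x -> V y -> e x y -> induced_path V e x y.
Proof. by move=> Vx Vy exy; apply: rt_step. Qed.

Lemma induced_path_sym x y :
  (forall a b, e a b -> e b a) -> induced_path V e x y -> induced_path V e y x.
Proof.
move=> e_sym; elim=> [a b [Va [Vb eab]]|a|a b c _ Hba _ Hcb].
- by apply: induced_path_step => //; apply: e_sym.
- exact: rt_refl.
- exact: rt_trans Hcb Hba.
Qed.

Lemma induced_path_closed (P : T -> Prop) x y :
  (forall a b, P a -> V a -> V b -> e a b -> P b) ->
  P x -> induced_path V e x y -> P y.
Proof.
move=> P_closed Px xy; elim: xy Px => [a b [Va [Vb eab]]|//|a b c _ IHab _ IHbc] Pa.
- exact: P_closed Pa Va Vb eab.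
- exact: IHbc (IHab Pa).
Qed.

Lemma connected_on_hub h :
  (forall a b, e a b -> e b a) ->
  (forall x, V x -> induced_path V e x h) -> connected_on V e.
Proof.
move=> e_sym to_h x y Vx Vy.
exact: induced_path_trans (to_h x Vx) (induced_path_sym e_sym (to_h y Vy)).
Qed.

End InducedPaths.

Lemma induced_path_map (A B : Type) (V : A -> Prop) (e : A -> A -> Prop)
    (V' : B -> Prop) (e' : B -> B -> Prop) (f : A -> B) x y :
  (forall a, V a -> V' (f a)) ->
  (forall a b, V a -> V b -> e a b -> f a = f b \/ e' (f a) (f b)) ->
  induced_path V e x y -> induced_path V' e' (f x) (f y).
Proof.
move=> fV fe; elim=> [a b [Va [Vb eab]]|a|a b c _ IHab _ IHbc].
- case: (fe a b Va Vb eab) => [->|e'ab]; first exact: rt_refl.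
  by apply: induced_path_step => //; apply: fV.
- exact: rt_refl.
- exact: rt_trans IHab IHbc.
Qed.

Lemma order_expg_div_prime (gT : finGroupType) (x : gT) p :
  prime p -> p %| #[x]%g -> #[(x ^+ (#[x] %/ p))%g]%g = p.
Proof.
move=> p_pr px; rewrite orderXdiv ?dvdn_div // -{1}(divnK px) mulKn //.
by rewrite divn_gt0 ?prime_gt0 // dvdn_leq.
Qed.

Section PowerGraphPaths.
Variable gT : finGroupType.
Implicit Types x y : gT.

Local Notation P0_path := (induced_path (fun a : gT => a <> 1%g) (@padj gT)).

Lemma padj_sym x y : padj x y -> padj y x.
Proof. by case=> nxy xy; split; [move/esym | tauto]. Qed.

Lemma ppow_mem_cycle x y : (y \in <[x]>)%g -> ppow x y.
Proof.
case/cycleP=> i ->; exists (i + #[x]%g); rewrite addn_gt0 order_gt0 orbT.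
by rewrite expgD expg_order mulg1.
Qed.

Lemma ppow1 x : ppow x 1%g.
Proof. by exists #[x]%g; rewrite order_gt0 expg_order. Qed.

Lemma P0_path_cycle x y : x <> 1%g -> y <> 1%g -> (y \in <[x]>)%g -> P0_path x y.
Proof.
move=> x1 y1 yx; case: (eqVneq x y) => [->|nxy]; first exact: rt_refl.
by apply: induced_path_step => //; split; [apply/eqP | left; apply: ppow_mem_cycle].
Qed.

(* Two commuting elements of coprime orders both lie in the cyclic group generated
   by their product. *)
Lemma P0_path_coprime x y : commute x y -> coprime #[x]%g #[y]%g ->
  x <> 1%g -> y <> 1%g -> P0_path x y.
Proof.
move=> cxy co_xy x1 y1.
have xM : (x \in <[x * y]>)%g by apply: (subsetP (cycleMsub cxy co_xy)); apply: cycle_id.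
have yM : (y \in <[x * y]>)%g.
  rewrite cxy; apply: (subsetP (cycleMsub (esym cxy) _)); last exact: cycle_id.
  by rewrite coprime_sym.
have xy1 : (x * y <> 1)%g by move=> xy_1; move: xM; rewrite xy_1 cycle1 inE => /eqP.
apply: induced_path_trans (P0_path_cycle xy1 y1 yM).
exact: induced_path_sym padj_sym (P0_path_cycle xy1 x1 xM).
Qed.

Lemma power_graph_2connectedE : power_graph_2connected gT <-> P0_connected gT.
Proof.
split=> [conn|conn v]; first exact: conn.
case: (eqVneq v 1%g) => [->|v1] //.
apply: (connected_on_hub (h := 1%g)) => [|x xv]; first exact: padj_sym.
case: (eqVneq x 1%g) => [->|x1]; first exact: rt_refl.
apply: induced_path_step => //; first by move=> e1; rewrite e1 eqxx in v1.
by split; [apply/eqP | left; apply: ppow1].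
Qed.

Lemma O0_connected_of_P0 : P0_connected gT -> O0_connected gT.
Proof.
move=> conn m m' [m1 [x ox]] [m'1 [x' ox']]; subst m m'.
have ne1 (y : gT) : #[y]%g <> 1 -> y <> 1%g by move=> oy1 y1; apply: oy1; rewrite y1 order1.
have := conn x x' (ne1 x m1) (ne1 x' m'1).
apply: (induced_path_map (f := fun z : gT => #[z]%g)).
  by move=> a a1; split=> [/eqP|]; [rewrite order_eq1 => /eqP | exists a].
move=> a b _ _ [_ ab]; case: (eqVneq #[a]%g #[b]%g) => [->|nab]; [by left | right].
split; first exact/eqP.
by case: ab => [[k [_ ->]]|[k [_ ->]]]; [right | left]; apply: orderXdvd.
Qed.

Lemma mem_gen_class x y : (y \in gen_class x) = (<[y]>%g == <[x]>%g).
Proof. by rewrite inE. Qed.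

Lemma mem_gen_class_ne1 x y : x <> 1%g -> y \in gen_class x -> y <> 1%g.
Proof.
move=> x1; rewrite mem_gen_class => /eqP cyx y1; apply: x1; apply/eqP.
by rewrite -cycle_eq1 -cyx y1 cycle1.
Qed.

Lemma P0_path_gen_class x u w :
  x <> 1%g -> u \in gen_class x -> w \in gen_class x -> P0_path u w.
Proof.
move=> x1 ux wx; apply: P0_path_cycle.
- exact: mem_gen_class_ne1 ux.
- exact: mem_gen_class_ne1 wx.
by move: ux wx; rewrite !mem_gen_class => /eqP -> /eqP <-; apply: cycle_id.
Qed.

Lemma P0_path_of_tP0_path C D : induced_path (@tP0_vertex gT) (@tP0_adj gT) C D ->
  tP0_vertex C -> forall u w, u \in C -> w \in D -> P0_path u w.
Proof.
move=> CD; elim: (clos_rt_rt1n _ _ _ _ CD) => {CD C D} [C|C B D [_ [VB [nCB adj]]] _ IH].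
  by move=> [c [c1 ->]] u w; apply: P0_path_gen_class.
have [a [b [aC [bB ab]]]] := adj.
move=> [c [c1 eC]] u w uC wD; have [d [d1 eB]] := VB.
apply: induced_path_trans (_ : P0_path u a) _.
  by apply: P0_path_gen_class c1 _ _; rewrite -eC.
apply: induced_path_trans (IH VB b w bB wD).
apply: induced_path_step.
- by apply: mem_gen_class_ne1 c1 _; rewrite -eC.
- by apply: mem_gen_class_ne1 d1 _; rewrite -eB.
split=> // eab; apply: nCB; move: aC bB; rewrite eC eB eab !mem_gen_class.
by move=> /eqP c1b /eqP d1b; rewrite /gen_class -c1b -d1b.
Qed.

Lemma tP0_connectedE : tP0_connected gT <-> P0_connected gT.
Proof.
split=> conn.
- move=> x y x1 y1.
  have VC (z : gT) : z <> 1%g -> tP0_vertex (gen_class z) by exists z.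
  apply: (P0_path_of_tP0_path (conn _ _ (VC x x1) (VC y y1)) (VC x x1)).
    by rewrite mem_gen_class.
  by rewrite mem_gen_class.
- move=> C D [x [x1 ->]] [y [y1 ->]].
  apply: (induced_path_map (f := @gen_class gT) _ _ (conn x y x1 y1)).
    by move=> a a1; exists a.
  move=> a b _ _ [_ ab]; case: (eqVneq (gen_class a) (gen_class b)) => [->|nab]; [by left | right].
  by split; [apply/eqP | exists a, b; rewrite !mem_gen_class !eqxx].
Qed.

End PowerGraphPaths.

Lemma commute_of_conjg_fix (gT : finGroupType) (x y : gT) : (x ^ y = x)%g -> commute x y.
Proof. by move/conjg_fixP/commgP. Qed.

Section Permutations.
Variable T : finType.
Implicit Types (s t x y : {perm T}) (u v w z : T).

Lemma exists_notin (L : seq T) : size L < #|T| -> exists z, z \notin L.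
Proof.
move=> ltLT; apply/existsP; apply: contraTT ltLT => /existsPn L_full.
rewrite -leqNgt (leq_trans _ (card_size L)) // subset_leq_card //.
by apply/subsetP => z _; have := L_full z; rewrite negbK.
Qed.

Lemma exists_moved s : s <> 1%g -> exists u, s u != u.
Proof.
move=> s1; apply/existsP; apply: contra_notT s1 => /existsPn s_fix.
by apply/permP => z; rewrite perm1; apply/eqP; have := s_fix z; rewrite negbK.
Qed.

Lemma mem_porbitX s i a z : ((s ^+ i)%g z \in porbit s a) = (z \in porbit s a).
Proof. by rewrite -!eq_porbit_mem porbit_perm. Qed.

Lemma mem_porbit_perm s a z : (s z \in porbit s a) = (z \in porbit s a).
Proof. by have := mem_porbitX s 1 a z; rewrite expg1. Qed.

Lemma card_le_porbit_fix1 s a :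
  (forall z, s z != z -> z \in porbit s a) -> (forall u v, s u = u -> s v = v -> u = v) ->
  #|T| <= #|porbit s a|.+1.
Proof.
move=> moved_in fix1; rewrite -(cardsC (porbit s a)) -addn1 leq_add2l.
have fixed z : z \notin porbit s a -> s z = z.
  by move=> zO; apply/eqP; move: zO; apply: contraNT; apply: moved_in.
by apply/card_le1_eqP => u v; rewrite !inE => /fixed su /fixed sv; apply: fix1.
Qed.

Lemma commute_app s t z : commute s t -> s (t z) = t (s z).
Proof. by move=> cst; rewrite -!permM cst. Qed.

Lemma tperm_ne1 u v : u != v -> tperm u v <> 1%g.
Proof. by move=> uv t1; move: (tpermL u v); rewrite t1 perm1 => /eqP; rewrite (negbTE uv). Qed.

Lemma order_tperm u v : u != v -> #[tperm u v]%g = 2.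
Proof.
move=> uv; apply: nt_prime_order => //; first by rewrite expg2 tperm2.
exact/eqP/tperm_ne1.
Qed.

Lemma commute_tperm s u v : s u = u -> s v = v -> commute s (tperm u v).
Proof. by move=> su sv; apply/commute_sym/commute_of_conjg_fix; rewrite tpermJ su sv. Qed.

Definition cycle3 u v w : {perm T} := (tperm u v * tperm v w)%g.

Section Cycle3.
Variables u v w : T.
Hypotheses (uv : u != v) (uw : u != w) (vw : v != w).

Lemma cycle3_out z : z != u -> z != v -> z != w -> cycle3 u v w z = z.
Proof. by move=> zu zv zw; rewrite permM !tpermD // eq_sym. Qed.

Lemma cycle3_u : cycle3 u v w u = w.
Proof. by rewrite permM !tpermL. Qed.

Lemma cycle3_v : cycle3 u v w v = u.
Proof. by rewrite permM tpermR tpermD // eq_sym. Qed.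

Lemma cycle3_w : cycle3 u v w w = v.
Proof. by rewrite permM (tpermD uw vw) tpermR. Qed.

Lemma cycle3_ne1 : cycle3 u v w <> 1%g.
Proof. by move=> c1; move: cycle3_u; rewrite c1 perm1 => /eqP; rewrite (negbTE uw). Qed.

Lemma cycle3_cube : (cycle3 u v w ^+ 3 = 1)%g.
Proof.
apply/permP => z; rewrite perm1 permX /=.
case: (eqVneq z u) => [->|zu]; first by rewrite cycle3_u cycle3_w cycle3_v.
case: (eqVneq z v) => [->|zv]; first by rewrite cycle3_v cycle3_u cycle3_w.
case: (eqVneq z w) => [->|zw]; first by rewrite cycle3_w cycle3_v cycle3_u.
by rewrite !cycle3_out.
Qed.

Lemma order_cycle3 : #[cycle3 u v w]%g = 3.
Proof. by apply: nt_prime_order; rewrite ?cycle3_cube //; apply/eqP; apply: cycle3_ne1. Qed.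

End Cycle3.

Lemma cycle3J u v w s : (cycle3 u v w ^ s)%g = cycle3 (s u) (s v) (s w).
Proof. by rewrite conjMg !tpermJ. Qed.

Lemma commute_cycle3 s u v w :
  s u = u -> s v = v -> s w = w -> commute s (cycle3 u v w).
Proof. by move=> su sv sw; apply/commute_sym/commute_of_conjg_fix; rewrite cycle3J su sv sw. Qed.

Section PrimeOrderPerm.
Variables (y : {perm T}) (p : nat).
Hypotheses (p_pr : prime p) (oy : #[y]%g = p).

Lemma prime_order_ne1 : y <> 1%g.
Proof. by move=> y1; move: p_pr; rewrite -oy y1 order1. Qed.

Lemma card_porbit_prime a : y a != a -> #|porbit y a| = p.
Proof.
move=> ya; have: #|porbit y a| %| p.
  by rewrite -oy [#[y]%g](esym (card_orbit_stab 'P <[y]>%G a)) -porbitE dvdn_mulr.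
case/primeP: p_pr => _ dvd_p /dvd_p /orP [/eqP O1|/eqP //].
have: y a = a by apply: (card_le1_eqP (eq_leq O1)); rewrite ?(mem_porbit y 1) ?porbit_id.
by move/eqP; rewrite (negbTE ya).
Qed.

Lemma cycle_fix_moved g a : y a != a -> (g \in <[y]>)%g -> g a = a -> g = 1%g.
Proof.
move=> ya gy ga; apply/eqP; apply: contraTT ya => g1; rewrite negbK.
have /cycleP [m ->] : (y \in <[g]>)%g.
  by rewrite -(nt_gen_prime _ (_ : g \in <[y]>^#)%g) ?cycle_id ?[#|_|]oy // !inE g1.
by rewrite permX_fix.
Qed.

Lemma expg_eq_at_moved i j a :
  y a != a -> (y ^+ i)%g a = (y ^+ j)%g a -> (y ^+ i = y ^+ j)%g.
Proof.
move=> ya eij; apply/eqP; rewrite eq_mulgV1; apply/eqP/(cycle_fix_moved ya).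
  by rewrite groupM ?groupV ?mem_cycle.
by rewrite permM eij permK.
Qed.

(* y is a single p-cycle plus at most one fixed point; an element x commuting with y
   agrees with some y^j at one point of the cycle, hence on the whole cycle, hence
   everywhere. *)
Lemma cent_prime_order_perm x : #|T| <= p.+1 -> commute x y -> (x \in <[y]>)%g.
Proof.
move=> card_T cxy; have [a ya] := exists_moved prime_order_ne1.
pose O := porbit y a.
have O'le1 : #|~: O| <= 1 by rewrite -(leq_add2l #|O|) cardsC (card_porbit_prime ya) addn1.
have moved_in z : y z != z -> z \in O.
  by apply: contraR => zO; apply/eqP/(card_le1_eqP O'le1); rewrite inE ?mem_porbit_perm.
have [j xa] : exists j, x a = (y ^+ j)%g a.
  apply/porbitP/moved_in; rewrite -(commute_app _ cxy) (inj_eq perm_inj) //.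
pose r := (x * (y ^+ j)^-1)%g.
have cry : commute r y by apply/commute_sym/commuteM/commuteV/commuteX.
have ra : r a = a by rewrite permM xa permK.
suff /eqP : r = 1%g by rewrite -eq_mulgV1 => /eqP ->; apply: mem_cycle.
apply: perm_on_id O'le1; apply/subsetP => z; rewrite inE; apply: contraR.
rewrite inE negbK => /porbitP [i ->].
by rewrite (commute_app _ (commuteX i cry)) ra.
Qed.

End PrimeOrderPerm.

Lemma prime_dvd_order_perm (w : {perm T}) p :
  prime p -> #|T| <= p.+1 -> p %| #[w]%g -> #[w]%g = p.
Proof.
move=> p_pr card_T pw.
set y := (w ^+ (#[w] %/ p))%g.
have oy : #[y]%g = p := order_expg_div_prime p_pr pw.
have: #[w]%g %| p.
  rewrite -oy; apply: (order_dvdG (G := <[y]>%G)).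
  exact: (cent_prime_order_perm p_pr oy card_T (commuteX (#[w]%g %/ p) (commute_refl w))).
by move=> dvd_wp; apply/eqP; rewrite eqn_dvd dvd_wp pw.
Qed.

End Permutations.

Lemma commute_mul_conjg (gT : finGroupType) (x g : gT) :
  (x ^+ 2 = 1)%g -> commute g (g ^ x)%g -> commute x (g * g ^ x)%g.
Proof.
move=> x2 cg; apply/commute_sym/commute_of_conjg_fix.
by rewrite conjMg -conjgM -expg2 x2 conjg1 cg.
Qed.

Section OrbitSwap.
Variables (T : finType) (x : {perm T}) (p : nat) (a b : T).
Hypotheses (p_pr : prime p) (ox : #[x]%g = p) (xa : x a != a) (xb : x b != b)
  (b_notin : b \notin porbit x a).

Definition porbit_exp c z : nat :=
  if [pick i : 'I_#[x]%g | (x ^+ i)%g c == z] is Some i then i else 0.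

Lemma porbit_expK c z : z \in porbit x c -> (x ^+ porbit_exp c z)%g c = z.
Proof.
rewrite /porbit_exp => /porbitPmin [i lti ->]; case: pickP => [j /eqP //|no_exp].
by have := no_exp (Ordinal lti); rewrite eqxx.
Qed.

(* Exchanges the x-orbits of a and b, matching x^i a with x^i b. *)
Definition orbit_swap z : T :=
  if z \in porbit x a then (x ^+ porbit_exp a z)%g b
  else if z \in porbit x b then (x ^+ porbit_exp b z)%g a
  else z.

Lemma orbit_swap_a i : orbit_swap ((x ^+ i)%g a) = (x ^+ i)%g b.
Proof.
rewrite /orbit_swap mem_porbit; congr (fun g : {perm T} => g b).
exact: (expg_eq_at_moved p_pr ox xa (porbit_expK (mem_porbit _ _ _))).
Qed.

Lemma orbit_swap_b i : orbit_swap ((x ^+ i)%g b) = (x ^+ i)%g a.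
Proof.
rewrite /orbit_swap mem_porbitX (negbTE b_notin) mem_porbit.
congr (fun g : {perm T} => g a).
exact: (expg_eq_at_moved p_pr ox xb (porbit_expK (mem_porbit _ _ _))).
Qed.

Lemma orbit_swap_out z : z \notin porbit x a -> z \notin porbit x b -> orbit_swap z = z.
Proof. by rewrite /orbit_swap => /negbTE -> /negbTE ->. Qed.

Lemma orbit_swap_cases (P : T -> Prop) :
  (forall i, P ((x ^+ i)%g a)) -> (forall i, P ((x ^+ i)%g b)) ->
  (forall z, z \notin porbit x a -> z \notin porbit x b -> P z) -> forall z, P z.
Proof.
move=> Pa Pb Pout z.
case: (porbitP x a z) => [[i ->] //|za]; case: (porbitP x b z) => [[i ->] //|zb].
by apply: Pout; apply/porbitP.
Qed.

Lemma orbit_swapK : involutive orbit_swap.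
Proof.
apply: orbit_swap_cases => [i|i|z za zb]; first by rewrite orbit_swap_a orbit_swap_b.
  by rewrite orbit_swap_b orbit_swap_a.
by rewrite !orbit_swap_out.
Qed.

Definition orbit_swap_perm : {perm T} := perm (can_inj orbit_swapK).

Lemma orbit_swap_permE z : orbit_swap_perm z = orbit_swap z.
Proof. exact: permE. Qed.

Lemma commute_orbit_swap : commute x orbit_swap_perm.
Proof.
have xS i c : x ((x ^+ i)%g c) = (x ^+ i.+1)%g c by rewrite -permM -expgSr.
apply/permP; apply: orbit_swap_cases => [i|i|z za zb]; rewrite !permM !orbit_swap_permE.
- by rewrite orbit_swap_a !xS orbit_swap_a.
- by rewrite orbit_swap_b !xS orbit_swap_b.
by rewrite !orbit_swap_out // mem_porbit_perm.
Qed.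

Lemma orbit_swap_perm2 : (orbit_swap_perm ^+ 2 = 1)%g.
Proof. by apply/permP => z; rewrite permX /= !orbit_swap_permE orbit_swapK perm1. Qed.

Lemma orbit_swap_perm_ne1 : orbit_swap_perm <> 1%g.
Proof.
move=> s1; have := orbit_swap_a 0; rewrite -orbit_swap_permE s1 !expg0 !perm1 => ab.
by move: b_notin; rewrite -ab porbit_id.
Qed.

End OrbitSwap.

Section TranspositionHub.
Variable T : finType.
Hypothesis card_T : 9 <= #|T|.
Implicit Types (x y : {perm T}) (L : seq T).

Lemma exists2_notin L : size L + 2 <= 9 -> exists u v, [/\ u \notin L, v \notin L & u != v].
Proof.
move=> sizeL; have [u uL] : exists u, u \notin L by apply: exists_notin; lia.
have [v] : exists v, v \notin u :: L by apply: exists_notin; rewrite [size _]/=; lia.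
by rewrite inE negb_or => /andP [vu vL]; exists u, v; rewrite eq_sym.
Qed.

Lemma exists3_notin L : size L + 3 <= 9 ->
  exists u v w, [/\ u \notin L, v \notin L, w \notin L & [&& u != v, u != w & v != w]].
Proof.
move=> sizeL; have [u [v [uL vL uv]]] := @exists2_notin L (ltac:(lia)).
have [w] : exists w, w \notin u :: v :: L by apply: exists_notin; rewrite [size _]/=; lia.
rewrite !inE !negb_or => /and3P [wu wv wL].
by exists u, v, w; rewrite uv eq_sym wu eq_sym wv.
Qed.

Variables u0 v0 : T.
Hypothesis u0v0 : u0 != v0.

Local Notation P0_path := (induced_path (fun a : {perm T} => a <> 1%g) (@padj _)).
Local Notation h := (tperm u0 v0).

Lemma tperm_hub u v : u != v -> P0_path (tperm u v) h.
Proof.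
move=> uv; have [a [b [c [+ + + /and3P [ab ac bc]]]]] := @exists3_notin [:: u; v; u0; v0] isT.
rewrite !inE !negb_or => /and4P [au av au0 av0] /and4P [bu bv bu0 bv0] /and4P [cu cv cu0 cv0].
have P0_path_cycle3 u' v' : u' != v' -> u' != a -> u' != b -> u' != c ->
    v' != a -> v' != b -> v' != c -> P0_path (tperm u' v') (cycle3 a b c).
  move=> u'v' u'a u'b u'c v'a v'b v'c; apply: P0_path_coprime.
  - by apply: commute_cycle3; apply: tpermD; rewrite // eq_sym.
  - by rewrite order_tperm ?order_cycle3.
  - exact: tperm_ne1.
  - exact: cycle3_ne1.
have uv_c : P0_path (tperm u v) (cycle3 a b c) by apply: P0_path_cycle3; rewrite // eq_sym.
have h_c : P0_path h (cycle3 a b c) by apply: P0_path_cycle3; rewrite // eq_sym.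
exact: induced_path_trans uv_c (induced_path_sym (@padj_sym _) h_c).
Qed.

Lemma fix2_hub x u v : x <> 1%g -> coprime #[x]%g 2 -> x u = u -> x v = v -> u != v ->
  P0_path x h.
Proof.
move=> x1 co_x2 xu xv uv; apply: induced_path_trans (tperm_hub uv).
by apply: P0_path_coprime; rewrite ?order_tperm //; [apply: commute_tperm | apply: tperm_ne1].
Qed.

Lemma cycle3_hub a b c : a != b -> a != c -> b != c -> P0_path (cycle3 a b c) h.
Proof.
move=> ab ac bc; have [u [v [+ + uv]]] := @exists2_notin [:: a; b; c] isT.
rewrite !inE !negb_or => /and3P [ua ub uc] /and3P [va vb vc].
by apply: (fix2_hub (u := u) (v := v)); rewrite ?cycle3_out ?order_cycle3 //; apply: cycle3_ne1.
Qed.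

(* For an involution x and a 3-cycle g whose support is disjoint from its image
   under x, the element g * g^x has order 3 and commutes with x. *)
Lemma cycle3_pair_hub x a b c : (x ^+ 2 = 1)%g -> uniq [:: a; x a; b; x b; c; x c] ->
  P0_path x h.
Proof.
move=> x2 uniq_abc; move: (uniq_abc); rewrite /= !inE !negb_or.
case/and5P=> /and5P [axa ab axb ac axc] /and4P [xab xaxb xac xaxc] /and3P [bxb bc bxc].
move=> /andP [xbc xbxc] /andP [cxc _].
set g := cycle3 a b c; have gx : (g ^ x)%g = cycle3 (x a) (x b) (x c) by rewrite cycle3J.
have xx : (x * x = 1)%g by rewrite -expg2.
have cg : commute g (g ^ x)%g.
  by rewrite gx; apply: commute_cycle3; apply: cycle3_out; rewrite // eq_sym.
have y3 : ((g * g ^ x) ^+ 3 = 1)%g by rewrite expgMn // gx !cycle3_cube ?mulg1 // (inj_eq perm_inj).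
have ya : (g * g ^ x)%g a = c by rewrite permM gx cycle3_u // cycle3_out // eq_sym.
have y1 : (g * g ^ x)%g <> 1%g.
  by move=> y_1; move: ya; rewrite y_1 perm1 => /eqP; rewrite (negbTE ac).
have oy : #[(g * g ^ x)%g]%g = 3 by apply: nt_prime_order => //; apply/eqP.
have [u [v [+ + uv]]] := @exists2_notin [:: a; x a; b; x b; c; x c] isT.
have yfix z : z \notin [:: a; x a; b; x b; c; x c] -> (g * g ^ x)%g z = z.
  rewrite !inE !negb_or => /andP [za /and5P [zxa zb zxb zc zxc]].
  by rewrite permM gx !cycle3_out.
move=> /yfix yu /yfix yv; apply: induced_path_trans (_ : P0_path x (g * g ^ x)%g) _.
  have x1 : x <> 1%g by move=> x_1; move: axa; rewrite x_1 perm1 eqxx.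
  have ox : #[x]%g = 2 by apply: nt_prime_order => //; apply/eqP.
  by apply: P0_path_coprime; rewrite ?ox ?oy //; apply: commute_mul_conjg.
by apply: (fix2_hub (u := u) (v := v)); rewrite ?oy.
Qed.

Lemma involution_moved_triple x : (x ^+ 2 = 1)%g ->
  (forall u v w, [&& u != v, u != w & v != w] -> x u = u -> x v = v -> x w = w -> False) ->
  exists a b c, uniq [:: a; x a; b; x b; c; x c].
Proof.
move=> x2 no_fix3; have xx z : x (x z) = z by rewrite -permM -expg2 x2 perm1.
have moved_notin L : size L + 3 <= 9 -> exists2 z, z \notin L & x z != z.
  move=> sizeL; have [a [b [c [aL bL cL abc]]]] := exists3_notin sizeL.
  case: (eqVneq (x a) a) => xa; last by exists a.
  case: (eqVneq (x b) b) => xb; last by exists b.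
  by case: (eqVneq (x c) c) => xc; [case: (no_fix3 a b c) | exists c].
have uniq_cons2 L z : (forall t, t \in L -> x t \in L) -> z \notin L -> x z != z ->
    uniq L -> uniq [:: z, x z & L].
  move=> L_x zL xz uL; have xzL : x z \notin L by apply: contra zL => /L_x; rewrite xx.
  by rewrite /= inE negb_or eq_sym xz zL xzL.
have closed2 z L : (forall t, t \in L -> x t \in L) ->
    forall t, t \in [:: z, x z & L] -> x t \in [:: z, x z & L].
  by move=> L_x t; rewrite !inE => /or3P [/eqP ->|/eqP ->|/L_x ->]; rewrite ?xx ?eqxx ?orbT.
have [a _ xa] := moved_notin [::] isT.
have [b abL xb] := moved_notin [:: a; x a] isT.
have [c abcL xc] := moved_notin [:: b; x b; a; x a] isT.
exists c, b, a; apply: (uniq_cons2) => //; first by do 2 apply: (closed2).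
by apply: (uniq_cons2) => //; [exact: closed2 | apply: (uniq_cons2)].
Qed.

Lemma involution_hub x : (x ^+ 2 = 1)%g -> x <> 1%g -> P0_path x h.
Proof.
move=> x2 x1; have ox : #[x]%g = 2 by apply: nt_prime_order => //; apply/eqP.
case: (pickP [pred t : T * T * T | [&& [&& t.1.1 != t.1.2, t.1.1 != t.2 & t.1.2 != t.2],
                                  x t.1.1 == t.1.1 & (x t.1.2 == t.1.2) && (x t.2 == t.2)]]).
  move=> [[u v] w] /and3P [/and3P [uv uw vw] /eqP xu /andP [/eqP xv /eqP xw]].
  apply: induced_path_trans (cycle3_hub uv uw vw).
  apply: P0_path_coprime; rewrite ?ox ?order_cycle3 //; last exact: cycle3_ne1.
  exact: commute_cycle3.
move=> no_fix3; have [a [b [c uniq_abc]]] : exists a b c, uniq [:: a; x a; b; x b; c; x c].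
  apply: involution_moved_triple => // u v w uvw xu xv xw.
  by move: (no_fix3 (u, v, w)); rewrite /= uvw xu xv xw !eqxx.
exact: cycle3_pair_hub x2 uniq_abc.
Qed.

Lemma odd_prime_order_hub x p : prime p -> p != 2 -> #[x]%g = p ->
  ~ prime #|T| -> ~ prime #|T|.-1 -> P0_path x h.
Proof.
move=> p_pr p2 ox npT npT1.
have co_p2 : coprime p 2 by rewrite prime_coprime // dvdn_prime2.
have x1 := prime_order_ne1 p_pr ox.
case: (pickP [pred t : T * T | [&& t.1 != t.2, x t.1 == t.1 & x t.2 == t.2]]).
  move=> [u v] /and3P [uv /eqP xu /eqP xv].
  by apply: (fix2_hub (u := u) (v := v)); rewrite ?ox.
move=> no_fix2; have fix1 u v : x u = u -> x v = v -> u = v.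
  by move=> xu xv; apply/eqP; apply: contraFT (no_fix2 (u, v)) => uv; rewrite /= uv xu xv !eqxx.
have [a xa] := exists_moved x1.
case: (pickP [pred b | (x b != b) && (b \notin porbit x a)]).
  move=> b /andP [xb b_notin]; pose s := orbit_swap_perm p_pr ox xa xb b_notin.
  have s1 : s <> 1%g by apply: orbit_swap_perm_ne1.
  have s2 : (s ^+ 2 = 1)%g by apply: orbit_swap_perm2.
  apply: induced_path_trans (involution_hub s2 s1).
  apply: P0_path_coprime; rewrite ?ox ?(nt_prime_order _ s2) //; last exact/eqP.
  exact: commute_orbit_swap.
move=> all_in_orbit; exfalso.
have moved_in z : x z != z -> z \in porbit x a.
  by move=> xz; move: (all_in_orbit z); rewrite /= xz /= => /negbFE.
have le_T : #|T| <= p.+1.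
  by rewrite -(card_porbit_prime p_pr ox xa); apply: card_le_porbit_fix1 moved_in fix1.
have le_p : p <= #|T| by rewrite -(card_porbit_prime p_pr ox xa) max_card.
have [pT|pT1] : #|T| = p \/ #|T| = p.+1 by lia.
- by apply: npT; rewrite pT.
- by apply: npT1; rewrite pT1.
Qed.

Lemma nontrivial_hub x : ~ prime #|T| -> ~ prime #|T|.-1 -> x <> 1%g -> P0_path x h.
Proof.
move=> npT npT1 x1; have x_gt1 : 1 < #[x]%g.
  by rewrite ltn_neqAle order_gt0 eq_sym order_eq1 andbT; apply/eqP.
pose p := pdiv #[x]%g; have p_pr : prime p := pdiv_prime x_gt1.
have oy := order_expg_div_prime p_pr (pdiv_dvd _); set y := (x ^+ _)%g in oy.
apply: induced_path_trans (_ : P0_path x y) _.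
  by apply: P0_path_cycle; rewrite ?mem_cycle //; apply: prime_order_ne1 p_pr oy.
case: (eqVneq p 2) => [p2|p2]; last exact: odd_prime_order_hub p_pr p2 oy npT npT1.
by apply: involution_hub; [rewrite -p2 -oy expg_order | apply: prime_order_ne1 p_pr oy].
Qed.

End TranspositionHub.

Lemma P0_connected_perm (T : finType) :
  9 <= #|T| -> ~ prime #|T| -> ~ prime #|T|.-1 -> P0_connected {perm T}.
Proof.
move=> card_T npT npT1; have [u0 [v0 [_ _ u0v0]]] := exists2_notin card_T (L := [::]) isT.
apply: (connected_on_hub (h := tperm u0 v0)); first exact: padj_sym.
by move=> x; apply: nontrivial_hub.
Qed.

Lemma geq_total : ssrbool.total geq.
Proof. by move=> m k; rewrite /= leq_total. Qed.

Lemma geq_trans : ssrbool.transitive geq.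
Proof. by move=> m k l /= km lm; apply: leq_trans lm km. Qed.

Lemma geq_anti : ssrbool.antisymmetric geq.
Proof. by move=> m k /= /andP [km mk]; apply/eqP; rewrite eqn_leq km mk. Qed.

Definition psort (s : seq nat) : seq nat := sort geq s.

Definition pflat (a : nat) (s : seq nat) : seq nat :=
  flatten [seq nseq (gcdn a m) (m %/ gcdn a m) | m <- s].

Lemma psort_eq s t : perm_eq s t -> psort s = psort t.
Proof. exact/(perm_sortP geq_total geq_trans geq_anti). Qed.

Lemma perm_psort s : perm_eq (psort s) s.
Proof. by rewrite perm_sort. Qed.

Lemma mem_psort s m : (m \in psort s) = (m \in s).
Proof. exact: mem_sort. Qed.

Lemma psort_sorted s : sorted geq s -> psort s = s.
Proof. exact: (sorted_sort geq_trans). Qed.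

Lemma part_pow_psort a s : part_pow a (psort s) = psort (pflat a s).
Proof. by apply: psort_eq; apply/perm_flatten/perm_map/perm_psort. Qed.

Lemma pflat_cons a m s : pflat a (m :: s) = nseq (gcdn a m) (m %/ gcdn a m) ++ pflat a s.
Proof. by []. Qed.

Lemma pflat_cat a s t : pflat a (s ++ t) = pflat a s ++ pflat a t.
Proof. by rewrite /pflat map_cat flatten_cat. Qed.

Lemma pflat_nseq a k m : pflat a (nseq k m) = nseq (k * gcdn a m) (m %/ gcdn a m).
Proof.
by elim: k => // k IHk; rewrite -[nseq k.+1 m]/(m :: nseq k m) pflat_cons IHk -nseqD mulSn.
Qed.

Lemma pflat_nseq_coprime a k m : coprime a m -> pflat a (nseq k m) = nseq k m.
Proof. by rewrite pflat_nseq /coprime => /eqP ->; rewrite muln1 divn1. Qed.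

Lemma pflat_nseq_mul a k m : 0 < a -> pflat a (nseq k (m * a)) = nseq (k * a) m.
Proof. by move=> a_gt0; rewrite pflat_nseq gcdnMl mulnK. Qed.

Lemma mem_pflat a s q : q \in pflat a s -> exists2 r, r \in s & q = r %/ gcdn a r.
Proof. by case/flattenP => _ /mapP [r rs ->] /nseqP [-> _]; exists r. Qed.

Lemma pflat_mem a s r : 0 < a -> r \in s -> r %/ gcdn a r \in pflat a s.
Proof.
move=> a_gt0 rs; apply/flattenP; exists (nseq (gcdn a r) (r %/ gcdn a r)).
  by apply/mapP; exists r.
by apply/nseqP; rewrite gcdn_gt0 a_gt0.
Qed.

Lemma sumn_pflat a s : sumn (pflat a s) = sumn s.
Proof.
by elim: s => //= r s IHs; rewrite sumn_cat sumn_nseq -/(pflat a s) IHs divnK ?dvdn_gcdr.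
Qed.

Lemma positive_pflat a s : all (fun m => 0 < m) s -> all (fun m => 0 < m) (pflat a s).
Proof.
move=> /allP s_pos; apply/allP => _ /mem_pflat [r /s_pos r_pos ->].
by rewrite /= divn_gt0 ?gcdn_gt0 ?r_pos ?orbT // dvdn_leq ?dvdn_gcdr.
Qed.

Lemma pflat_nseq1 a k : pflat a (nseq k 1) = nseq k 1.
Proof. exact/pflat_nseq_coprime/coprimen1. Qed.

Lemma pflat_nseq_self a k : 0 < a -> pflat a (nseq k a) = nseq (k * a) 1.
Proof. by move=> a_gt0; rewrite pflat_nseq gcdnn divnn a_gt0. Qed.

Lemma psort_partition n s : all (fun r => 0 < r) s -> sumn s = n -> is_partition n (psort s).
Proof.
move=> s_pos sum_s; split; first exact: sort_sorted geq_total s.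
by rewrite (perm_all _ (perm_psort s)) (perm_sumn (perm_psort s)).
Qed.

Lemma psort_vertex n s m : all (fun r => 0 < r) s -> sumn s = n -> m \in s -> 1 < m ->
  PT0_vertex n (psort s).
Proof.
move=> s_pos sum_s ms m_gt1; split; first exact: psort_partition.
by move=> s1; move: ms; rewrite -mem_psort s1 => /nseqP [m1 _]; rewrite m1 in m_gt1.
Qed.

Lemma size_le_sumn s : all (fun r => 0 < r) s -> size s <= sumn s.
Proof. by elim: s => //= r s IHs /andP [r_pos /IHs]; lia. Qed.

Lemma mem_leq_sumn r s : r \in s -> r <= sumn s.
Proof. by elim: s => //= x s IHs; rewrite inE => /orP [/eqP ->|/IHs]; lia. Qed.

Lemma ones_of_sumn_le1 s : all (fun r => 0 < r) s -> sumn s <= 1 -> s = nseq (sumn s) 1.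
Proof.
elim: s => //= r s IHs /andP [r_pos /IHs s1] le1.
have r1 : r = 1 by lia.
have s0 : sumn s = 0 by lia.
by rewrite r1 s0 {1}s1 ?s0.
Qed.

Lemma size_pflat_le a s : 0 < a -> size s <= size (pflat a s).
Proof.
move=> a_gt0; elim: s => //= r s IHs.
by rewrite pflat_cons size_cat size_nseq; have := gcdn_gt0 a r; rewrite a_gt0 /=; lia.
Qed.

Lemma size_pflat_lt a s m : 0 < a -> m \in s -> 1 < gcdn a m -> size s < size (pflat a s).
Proof.
move=> a_gt0; elim: s => //= r s IHs; rewrite inE pflat_cons size_cat size_nseq.
have := gcdn_gt0 a r; rewrite a_gt0 /= => g_pos.
case/orP => [/eqP -> g_gt1|/IHs IH /IH]; last lia.
by have := size_pflat_le s a_gt0; lia.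
Qed.

Lemma perm_eq_two_values (s : seq nat) a b : a != b -> all (fun r => (r == a) || (r == b)) s ->
  perm_eq s (nseq (count_mem a s) a ++ nseq (count_mem b s) b).
Proof.
move=> ab ab_s; apply/seq.permP => P; rewrite count_cat !count_nseq.
elim: s ab_s => [|r s IHs] /=; first by rewrite !muln0.
case/andP=> /orP [] /eqP -> /IHs ->; rewrite eqxx ?(negbTE ab) 1?eq_sym ?(negbTE ab) /=;
  case: (P a); case: (P b) => /=; lia.
Qed.

Ltac perm_eq_by_count :=
  apply/seq.permP; let P := fresh "P" in
  intro P; rewrite ?count_cat ?count_nseq /=;
  repeat match goal with |- context [P ?m] => case: (P m) end; lia.

Ltac partition_vertex m :=
  apply: (@psort_vertex _ _ m);
  rewrite /= ?all_cat ?all_nseq ?sumn_cat ?sumn_nseq ?mem_cat ?mem_nseq ?inE ?eqxx /=; nia.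

Section PartitionGraph.
Variable n : nat.
Local Notation PT_path := (induced_path (PT0_vertex n) PT0_adj).

Lemma PT0_adj_sym T T' : PT0_adj T T' -> PT0_adj T' T.
Proof. by case=> nTT' powT; split; [move/esym | tauto]. Qed.

Lemma PT_path_pow a s t : 0 < a -> PT0_vertex n (psort s) -> PT0_vertex n (psort t) ->
  perm_eq t (pflat a s) -> PT_path (psort s) (psort t).
Proof.
move=> a_gt0 Vs + st; rewrite (psort_eq st) -part_pow_psort => Vt.
case: (eqVneq (psort s) (part_pow a (psort s))) => [<-|ne]; first exact: rt_refl.
by apply: induced_path_step => //; split; [apply/eqP | left; exists a].
Qed.

Lemma PT_path_pow_sym a s t : 0 < a -> PT0_vertex n (psort s) -> PT0_vertex n (psort t) ->
  perm_eq t (pflat a s) -> PT_path (psort t) (psort s).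
Proof.
by move=> a_gt0 Vs Vt st; apply: induced_path_sym PT0_adj_sym (PT_path_pow a_gt0 Vs Vt st).
Qed.

Definition transposition_type := psort (nseq 1 2 ++ nseq (n - 2) 1).

Hypothesis n_ge9 : 9 <= n.

Lemma odd_type_hub q k f : prime q -> q != 2 -> 0 < k -> 2 <= f -> k * q + f = n ->
  PT_path (psort (nseq k q ++ nseq f 1)) transposition_type.
Proof.
move=> q_pr q2 k_gt0 f_ge2 sum_n; have q_gt1 := prime_gt1 q_pr.
have co_2q : coprime 2 q by rewrite prime_coprime // dvdn_prime2 // eq_sym.
set mid := nseq k q ++ nseq 1 2 ++ nseq (f - 2) 1.
apply: induced_path_trans (_ : PT_path _ (psort mid)) _.
  apply: (PT_path_pow_sym (a := 2)) => //; try partition_vertex q.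
  rewrite !pflat_cat pflat_nseq_coprime // pflat_nseq_self // pflat_nseq1.
  perm_eq_by_count.
apply: (PT_path_pow (a := q)); first lia.
- partition_vertex q.
- partition_vertex 2.
rewrite !pflat_cat pflat_nseq_self ?pflat_nseq1 ?pflat_nseq_coprime 1?coprime_sym //; try lia.
perm_eq_by_count.
Qed.

Lemma involution_type_hub k f : 0 < k -> k * 2 + f = n ->
  PT_path (psort (nseq k 2 ++ nseq f 1)) transposition_type.
Proof.
move=> k_gt0 sum_n; case: (leqP 3 f) => [f_ge3|f_lt3].
  set mid := nseq 1 3 ++ nseq k 2 ++ nseq (f - 3) 1.
  apply: induced_path_trans (_ : PT_path _ (psort mid)) _.
    apply: (PT_path_pow_sym (a := 3)) => //; try partition_vertex 2.
    by rewrite !pflat_cat pflat_nseq_self // pflat_nseq_coprime // pflat_nseq1; perm_eq_by_count.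
  have hub3 : PT_path (psort (nseq 1 3 ++ nseq (n - 3) 1)) transposition_type.
    by apply: odd_type_hub => //; lia.
  apply: induced_path_trans hub3; apply: (PT_path_pow (a := 2)) => //; try partition_vertex 3.
  by rewrite !pflat_cat pflat_nseq_coprime // pflat_nseq_self // pflat_nseq1; perm_eq_by_count.
set mid := nseq 1 (2 * 3) ++ nseq (k - 3) 2 ++ nseq f 1.
apply: induced_path_trans (_ : PT_path _ (psort mid)) _.
  apply: (PT_path_pow_sym (a := 3)) => //; try partition_vertex 2.
  by rewrite !pflat_cat pflat_nseq_mul // pflat_nseq_coprime // pflat_nseq1; perm_eq_by_count.
have hub33 : PT_path (psort (nseq 2 3 ++ nseq (n - 6) 1)) transposition_type.
  by apply: odd_type_hub => //; lia.
apply: induced_path_trans hub33; apply: (PT_path_pow (a := 2)) => //.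
- partition_vertex (2 * 3).
- partition_vertex 3.
rewrite !pflat_cat [2 * 3]mulnC pflat_nseq_mul // pflat_nseq_self // pflat_nseq1.
perm_eq_by_count.
Qed.

Lemma prime_type_hub p k f : prime p -> 0 < k -> k * p + f = n ->
  ~ prime n -> ~ prime n.-1 -> PT_path (psort (nseq k p ++ nseq f 1)) transposition_type.
Proof.
move=> p_pr k_gt0 sum_n npn npn1; have p_gt1 := prime_gt1 p_pr.
case: (eqVneq p 2) => [p2|p2]; first by rewrite p2 in sum_n *; apply: involution_type_hub.
case: (leqP 2 f) => [f_ge2|f_lt2]; first exact: odd_type_hub.
have k_ne1 : k != 1.
  apply/eqP => k1; have [f0|f1] : f = 0 \/ f = 1 by lia.
  - by apply: npn; rewrite -sum_n k1 f0 mul1n addn0.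
  - by apply: npn1; rewrite -sum_n k1 f1 mul1n addn1.
have k_ge2 : 2 <= k by lia.
have co_2p : coprime 2 p by rewrite prime_coprime // dvdn_prime2 // eq_sym.
set mid := nseq 1 (p * 2) ++ nseq (k - 2) p ++ nseq f 1.
apply: induced_path_trans (_ : PT_path _ (psort mid)) _.
  apply: (PT_path_pow_sym (a := 2)) => //; [partition_vertex (p * 2) | partition_vertex p |].
  by rewrite !pflat_cat pflat_nseq_mul // pflat_nseq_coprime // pflat_nseq1; perm_eq_by_count.
have hub2 : PT_path (psort (nseq p 2 ++ nseq ((k - 2) * p + f) 1)) transposition_type.
  by apply: involution_type_hub; nia.
apply: induced_path_trans hub2.
apply: (PT_path_pow (a := p)); [lia | partition_vertex (p * 2) | partition_vertex 2 |].
rewrite !pflat_cat [p * 2]mulnC pflat_nseq_mul ?pflat_nseq_self ?pflat_nseq1 //; try lia.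
perm_eq_by_count.
Qed.

Lemma vertex_part_gt1 T : PT0_vertex n T -> exists2 m, m \in T & 1 < m.
Proof.
case=> [[_ [T_pos sum_T]] T_ne1]; apply/hasP; apply: contra_notT T_ne1 => /hasPn T_le1.
have /all_pred1P T1 : all (pred1 1) T.
  by apply/allP => r rT; move/allP: T_pos => /(_ r rT); move: (T_le1 r rT) => /=; lia.
by rewrite T1 -sum_T {2}T1 sumn_nseq mul1n.
Qed.

Lemma prime_type_of_trivial_pow p T : prime p -> PT0_vertex n T ->
  psort (pflat p T) = nseq n 1 ->
  exists k f, [/\ 0 < k, k * p + f = n & T = psort (nseq k p ++ nseq f 1)].
Proof.
move=> p_pr VT pT1; have [[T_sorted [_ sum_T]] _] := VT.
have T_p1 : all (fun r => (r == p) || (r == 1)) T.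
  apply/allP => r rT; have : r %/ gcdn p r \in psort (pflat p T).
    by rewrite mem_psort pflat_mem ?prime_gt0.
  rewrite pT1 => /nseqP [r_g _]; have r_dvd_p : r %| p.
    by rewrite -(divnK (dvdn_gcdr p r)) r_g mul1n dvdn_gcdl.
  by case/primeP: p_pr => _ /(_ r r_dvd_p) /orP [] ->; rewrite ?orbT.
have p1 : p != 1 by rewrite eq_sym neq_ltn prime_gt1.
have permT := perm_eq_two_values p1 T_p1.
exists (count_mem p T), (count_mem 1 T); split.
- have [m mT m_gt1] := vertex_part_gt1 VT; rewrite -has_count; apply/hasP; exists m => //.
  by move/allP: T_p1 => /(_ m mT) /orP [//|/eqP m1]; rewrite m1 in m_gt1.
- by rewrite -sum_T (perm_sumn permT) sumn_cat !sumn_nseq mul1n mulnC.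
- by rewrite -(psort_eq permT) psort_sorted.
Qed.

Lemma PT_path_to_hub T : ~ prime n -> ~ prime n.-1 -> PT0_vertex n T ->
  PT_path T transposition_type.
Proof.
move=> npn npn1.
have := ltnSn (n - size T); move: {2}(n - size T).+1 => d.
elim: d T => [|d IHd] T; first by rewrite ltn0.
move=> lt_d VT; have [[T_sorted [T_pos sum_T]] _] := VT.
have [m mT m_gt1] := vertex_part_gt1 VT; pose p := pdiv m.
have p_pr : prime p := pdiv_prime m_gt1; have p_gt0 := prime_gt0 p_pr.
case: (eqVneq (psort (pflat p T)) (nseq n 1)) => [pT1|pT_ne1].
  have [k [f [k_gt0 sum_n ->]]] := prime_type_of_trivial_pow p_pr VT pT1.
  exact: prime_type_hub.
have VpT : PT0_vertex n (psort (pflat p T)).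
  by split; [apply: psort_partition; rewrite ?positive_pflat ?sumn_pflat | apply/eqP].
apply: induced_path_trans (_ : PT_path T (psort (pflat p T))) (IHd _ _ VpT).
  rewrite -{1}(psort_sorted T_sorted).
  by apply: (PT_path_pow (a := p)); rewrite ?(psort_sorted T_sorted).
have lt_size : size T < size (pflat p T).
  by apply: (size_pflat_lt p_gt0 mT); rewrite (gcdn_idPl (pdiv_dvd m)) prime_gt1.
have := size_le_sumn (positive_pflat p T_pos); rewrite sumn_pflat /psort size_sort; lia.
Qed.

End PartitionGraph.

Definition prime_cycle_type n p := psort (p :: nseq (n - p) 1).

Section PrimeCycleType.
Variables n p : nat.
Hypotheses (p_pr : prime p) (p_le_n : p <= n) (n_le_p1 : n <= p.+1).

Lemma part_pow_prime_cycle_type a :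
  part_pow a (prime_cycle_type n p) = prime_cycle_type n p \/
  part_pow a (prime_cycle_type n p) = nseq n 1.
Proof.
rewrite part_pow_psort pflat_cons pflat_nseq1.
case/primeP: p_pr => _ /(_ _ (dvdn_gcdr a p)) /orP [] /eqP ->; first by left; rewrite divn1.
right; rewrite divnn prime_gt0 // -nseqD subnKC // psort_sorted //.
by elim: n => [|[|k] IHk] //=; rewrite leqnn.
Qed.

(* A part r of T with r / gcd(a, r) = p is at most n < 2p, so r = p; the other parts
   sum to n - p <= 1. *)
Lemma part_pow_eq_prime_cycle_type a T : 0 < a -> PT0_vertex n T ->
  part_pow a T = prime_cycle_type n p -> T = prime_cycle_type n p.
Proof.
move=> a_gt0 [[T_sorted [T_pos sum_T]] _] powT.
have : p \in part_pow a T by rewrite powT mem_psort inE eqxx.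
rewrite /part_pow -/(pflat a T) mem_sort => /mem_pflat [r rT p_r].
have r_le_n : r <= n by rewrite -sum_T mem_leq_sumn.
have r_p : r = p.
  have g_pos : 0 < gcdn a r by rewrite gcdn_gt0 a_gt0.
  have r_pg : r = p * gcdn a r by rewrite p_r divnK ?dvdn_gcdr.
  suff g1 : gcdn a r = 1 by rewrite r_pg g1 muln1.
  by move: r_le_n (prime_gt1 p_pr); rewrite {1}r_pg; nia.
subst r; have permT := perm_to_rem rT.
have rest_pos : all (fun r => 0 < r) (rem p T) by apply/allP => r /mem_rem /(allP T_pos).
have sum_rest : sumn (rem p T) = n - p by move: (perm_sumn permT) => /=; lia.
rewrite -(psort_sorted T_sorted) (psort_eq permT) (ones_of_sumn_le1 rest_pos) ?sum_rest //.
lia.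
Qed.

End PrimeCycleType.

Lemma PT0_disconnected n p : prime p -> 3 <= p -> p <= n <= p.+1 -> ~ PT0_connected n.
Proof.
move=> p_pr p_ge3 /andP [p_le_n n_le_p1] conn; have p_gt0 := prime_gt0 p_pr.
have V0 : PT0_vertex n (prime_cycle_type n p) by partition_vertex p.
have V2 : PT0_vertex n (transposition_type n) by partition_vertex 2.
have : transposition_type n = prime_cycle_type n p.
  apply: (induced_path_closed (P := fun T => T = prime_cycle_type n p) _ _ (conn _ _ V0 V2)) => //.
  move=> _ b -> _ Vb [_ [[c [c_gt0 powT0]]|[c [c_gt0 powb]]]].
    by case: Vb => _; rewrite powT0; case: (part_pow_prime_cycle_type p_pr p_le_n c).
  exact: (part_pow_eq_prime_cycle_type p_pr p_le_n n_le_p1 c_gt0 Vb (esym powb)).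
move=> T2_Tp; have : 2 \in prime_cycle_type n p by rewrite -T2_Tp mem_psort inE eqxx.
by rewrite mem_psort inE => /orP [/eqP p2|/nseqP [] //]; rewrite -p2 in p_ge3.
Qed.

Lemma O0_disconnected n p : prime p -> 3 <= p -> p <= n <= p.+1 -> ~ O0_connected {perm 'I_n}.
Proof.
move=> p_pr p_ge3 /andP [p_le_n n_le_p1] conn.
have [y _ oy] : {y | y \in [set: {perm 'I_n}] & #[y]%g = p}.
  by apply: Cauchy => //; rewrite cardsT card_Sn dvdn_fact // prime_gt0.
have n_gt1 : 1 < n by lia.
have Vp : O0_vertex {perm 'I_n} p by split; [move=> p1; rewrite p1 in p_pr | exists y].
have V2 : O0_vertex {perm 'I_n} 2.
  by split=> //; exists (tperm (Ordinal (ltnW n_gt1)) (Ordinal n_gt1)); apply: order_tperm.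
have card_T : #|'I_n| <= p.+1 by rewrite card_ord.
have : 2 = p.
  apply: (induced_path_closed (P := fun m => m = p) _ (erefl p) (conn _ _ Vp V2)).
  move=> _ b -> _ [b1 [w ow]] [_ [pb|bp]]; subst b.
    exact: prime_dvd_order_perm p_pr card_T pb.
  by case/primeP: p_pr => _ /(_ _ bp) /orP [/eqP|/eqP].
by move=> p2; rewrite -p2 in p_ge3.
Qed.

Lemma P0_connected_S2 : P0_connected {perm 'I_2}.
Proof.
move=> x y x1 y1; suff -> : x = y by apply: rt_refl.
have : #|[pred z : {perm 'I_2} | z != 1%g]| <= 1 by rewrite cardC1 card_Sn.
by move/card_le1_eqP; apply; apply/eqP.
Qed.

Lemma PT0_connected_two : PT0_connected 2.
Proof.
have only_vertex T : PT0_vertex 2 T -> T = [:: 2].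
  case=> [[_ [T_pos sum_T]] T_ne11].
  case: T T_pos sum_T T_ne11 => [//|a [|b [|c s]]] /=; first by rewrite addn0 => _ ->.
    by case/and3P=> ? ? _; rewrite addn0 => sum2 ne; exfalso; apply: ne; congr [:: _; _]; lia.
  by case/and4P=> ? ? ? _; lia.
by move=> T T' /only_vertex -> /only_vertex ->; apply: rt_refl.
Qed.

Lemma PT0_connected_of_composite n : 9 <= n -> ~ prime n -> ~ prime n.-1 -> PT0_connected n.
Proof.
move=> n_ge9 npn npn1; apply: (connected_on_hub (h := transposition_type n)).
  exact: PT0_adj_sym.
by move=> T; apply: PT_path_to_hub.
Qed.

Lemma composite_pair_cases n : 2 <= n -> n = 2 \/ (~ prime n /\ ~ prime n.-1) ->
  n = 2 \/ [/\ 9 <= n, ~ prime n & ~ prime n.-1].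
Proof.
move=> n_ge2 [->|[npn npn1]]; [by left | right]; split=> //.
move: n_ge2 npn npn1; do 9![case: n => [|n] //]; by [move=> _ [] | move=> _ _ []].
Qed.

Lemma composite_pair_of_no_prime n : 2 <= n ->
  (forall p, prime p -> 3 <= p -> p <= n <= p.+1 -> False) ->
  n = 2 \/ ~ prime n /\ ~ prime n.-1.
Proof.
move=> n_ge2 no_p; case: (eqVneq n 2) => [|n2]; [by left | right].
have n_ge3 : 3 <= n by rewrite ltn_neqAle eq_sym n2.
have npn : ~ prime n by move=> pn; apply: (no_p n pn) => //; rewrite leqnn leqnSn.
split=> // pn1; apply: (no_p n.-1 pn1); last by apply/andP; split; lia.
rewrite ltn_neqAle prime_gt1 // andbT; apply: contra_notN npn => /eqP n1_2.
by rewrite (_ : n = 3) //; lia.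
Qed.

Theorem corollaryC (n : nat) (hn : 2 <= n) :
  (power_graph_2connected {perm 'I_n} <-> (n = 2 \/ (~ prime n /\ ~ prime n.-1))) /\
  (P0_connected {perm 'I_n} <-> (n = 2 \/ (~ prime n /\ ~ prime n.-1))) /\
  (tP0_connected {perm 'I_n} <-> (n = 2 \/ (~ prime n /\ ~ prime n.-1))) /\
  (PT0_connected n <-> (n = 2 \/ (~ prime n /\ ~ prime n.-1))) /\
  (O0_connected {perm 'I_n} <-> (n = 2 \/ (~ prime n /\ ~ prime n.-1))).
Proof.
have O0_C : O0_connected {perm 'I_n} -> n = 2 \/ (~ prime n /\ ~ prime n.-1).
  move=> conn; apply: composite_pair_of_no_prime hn _ => p p_pr p_ge3 p_n.
  exact: O0_disconnected p_n conn.
have P0_C : P0_connected {perm 'I_n} <-> n = 2 \/ (~ prime n /\ ~ prime n.-1).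
  split=> [/O0_connected_of_P0 //|/(composite_pair_cases hn) [-> | [n_ge9 npn npn1]]].
    exact: P0_connected_S2.
  by apply: P0_connected_perm; rewrite card_ord.
split; first by rewrite power_graph_2connectedE.
split; first exact: P0_C.
split; first by rewrite tP0_connectedE.
split; last by split=> [//|/P0_C /O0_connected_of_P0].
split=> [conn|/(composite_pair_cases hn) [-> | [n_ge9 npn npn1]]].
- apply: composite_pair_of_no_prime hn _ => p p_pr p_ge3 p_n.
  exact: PT0_disconnected p_n conn.
- exact: PT0_connected_two.
- exact: PT0_connected_of_composite.
Qed.
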